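(* Let $\mathbb{K}$ be a field with $\operatorname{char}(\mathbb{K})\neq 2$, let $d\geq 2$ and $\mathcal{R}=M_d(\mathbb{K})$, the ring of $d\times d$ matrices over $\mathbb{K}$, and let $f(\chi_1,\ldots,\chi_n)$ be a multilinear polynomial over $\mathbb{K}$ which is not central-valued on $\mathcal{R}$. Let $a_1,\ldots,a_6\in\mathcal{R}$ be such that $$a_1f(\zeta)^2+a_2f(\zeta)a_3f(\zeta)+f(\zeta)a_5f(\zeta)a_6+f(\zeta)a_4f(\zeta)-a_5f(\zeta)^2a_6=0$$ for all $\zeta=(\zeta_1,\ldots,\zeta_n)\in\mathcal{R}^n$. Then one of the following holds: (1) $a_2,a_5\in\mathbb{K}\cdot I_d$; (2) $a_2,a_6\in\mathbb{K}\cdot I_d$; (3) $a_3,a_5\in\mathbb{K}\cdot I_d$; (4) $a_3,a_6\in\mathbb{K}\cdot I_d$.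
   Context: A multilinear polynomial over $\mathbb{K}$ is a noncommutative polynomial in which each variable appears exactly once in every monomial; it is non-central if not all its values on $\mathcal{R}$ are scalar matrices. $I_d$ is the identity matrix. (The paper writes $a_i\in\mathcal{U}$, the Utumi quotient ring, which for $M_d(\mathbb{K})$ coincides with $M_d(\mathbb{K})$.) *)

From HB Require Import structures.
From mathcomp Require Import all_boot all_order all_fingroup all_algebra.
Set Implicit Arguments. Unset Strict Implicit. Unset Printing Implicit Defensive.
Import GRing.Theory.
Local Open Scope ring_scope.

(* A multilinear noncommutative polynomial in the variables x_0,...,x_{n-1}
   over K: every monomial contains each variable exactly once, hence is
   x_{s 0} x_{s 1} ... x_{s (n-1)} for a permutation s of 'I_n. *)
Definition multilin_poly (K : fieldType) (n : nat) := {ffun 'S_n -> K}.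

Definition mlp_eval (K : fieldType) (n m : nat) (f : multilin_poly K n)
    (z : 'I_n -> 'M[K]_m.+1) : 'M[K]_m.+1 :=
  \sum_(s : 'S_n) f s *: \prod_(i < n) z (s i).

Definition central_valued (K : fieldType) (n m : nat) (f : multilin_poly K n) :=
  forall z : 'I_n -> 'M[K]_m.+1, is_scalar_mx (mlp_eval f z).

(* Write Q(X) = a1 X^2 + a2 X a3 X + X a5 X a6 + X a4 X - a5 X^2 a6, the diagonal of
   the bilinear form [gpi_form].  Because f is multilinear and 2 != 0, polarizing one
   variable at a time shows that Q still vanishes on the values of f over any integral
   domain containing K, in particular over K[t] and K[t][u].  As Q is quadratic and f
   multilinear, Q(A X B) = 0 whenever B A is a nonzero scalar; with A = u + E, B = u - E
   for E^2 = 0, specializing u to 0 gives Q(E X E) = 0 for every value X of f.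
   Given any H over K[t] and i != j, put phi(M) = (H M adj H)_ji.  The matrix
   F = adj(H) e_ij H satisfies F^2 = 0 and F M F = phi(M) F, so Q(F X F) = phi(X)^2 Q(F),
   and reading off suitable (j, i) entries gives phi(a2) phi(a3) phi(X)^3 = 0 and
   phi(a5) phi(a6) phi(X)^3 = 0.  Every non-scalar matrix has a conjugate with a nonzero
   (j, i) entry; interpolating the three conjugating matrices for X, a2, a3 at t = 0, 1, -1
   gives an H for which all three factors are nonzero polynomials, which is impossible.
   Hence a2 or a3 is scalar, and likewise a5 or a6.  (K may be finite, which is why the
   argument runs over K[t] rather than over K.) *)

From HB Require Import structures.
From mathcomp Require Import all_boot all_order all_fingroup all_algebra ring.
Set Implicit Arguments. Unset Strict Implicit. Unset Printing Implicit Defensive.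
Import GRing.Theory.
Local Open Scope ring_scope.

Lemma prod_update_linear (R : pzRingType) (A : algType R) (I : eqType) (r : seq I) (j : I)
    (F : I -> A) :
  count_mem j r = 1%N -> linear (fun x => \prod_(i <- r) [eta F with j |-> x] i).
Proof.
elim: r => [|i r IHr] //= r_j a x y; rewrite !big_cons /=.
have [ij | ij] := eqVneq i j; last first.
  rewrite (negPf ij) add0n in r_j.
  by have /= -> := IHr r_j a x y; rewrite mulrDr scalerAr.
move: r_j; rewrite ij eqxx add1n => -[/count_memPn jNr].
have eqF w : \prod_(k <- r) (if k == j then w else F k) = \prod_(k <- r) F k.
  by apply: eq_big_seq => k kr; rewrite ifN //; apply: contraNneq jNr => <-.
by rewrite !eqF mulrDl scalerAl.
Qed.

Lemma prod_conj_scalar (R : comNzRingType) n (I : Type) (r : seq I) (F : I -> 'M[R]_n.+1)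
    (P Q : 'M[R]_n.+1) (k : R) :
  Q * P = k%:A -> (0 < size r)%N ->
  \prod_(i <- r) (P * F i * Q) = k ^+ (size r).-1 *: (P * \prod_(i <- r) F i * Q).
Proof.
move=> QP; case: r => // i r _; elim: r i => [|i' r IHr] i.
  by rewrite !big_seq1 scale1r.
set X := \prod_(j <- i' :: r) F j.
have E : P * F i * Q * (P * X * Q) = k *: (P * (F i * X) * Q).
  by rewrite !mulrA -(mulrA _ Q P) QP mulr_algr -!scalerAl.
by rewrite big_cons IHr [in RHS]big_cons /= exprSr -scalerA -E [RHS]scalerAr.
Qed.

Lemma size_index_enum_ord N : size (index_enum 'I_N) = N.
Proof. by rewrite /index_enum unlock -enumT -cardT card_ord. Qed.

Section MultilinearEval.
Variables (R : comNzRingType) (N n : nat) (c : 'S_N -> R).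

Definition mlp_evalR (z : 'I_N -> 'M[R]_n.+1) : 'M[R]_n.+1 :=
  \sum_(s : 'S_N) c s *: \prod_(i < N) z (s i).

Lemma eq_mlp_evalR z1 z2 : z1 =1 z2 -> mlp_evalR z1 = mlp_evalR z2.
Proof. by move=> z12; apply: eq_bigr => s _; under eq_bigr do rewrite z12. Qed.

Lemma mlp_evalR_update_linear z k : linear (fun w => mlp_evalR [eta z with k |-> w]).
Proof.
move=> a x y; rewrite /mlp_evalR scaler_sumr -big_split; apply: eq_bigr => s _ /=.
have sk w : \prod_(i < N) [eta z with k |-> w] (s i) =
            \prod_(i < N) [eta z \o s with (s^-1)%g k |-> w] i.
  by apply: eq_bigr => i _ /=; rewrite -{1}(permKV s k) (inj_eq perm_inj).
rewrite !sk prod_update_linear; last by rewrite count_uniq_mem ?index_enum_uniq ?mem_index_enum.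
by rewrite scalerDr !scalerA mulrC.
Qed.

Lemma mlp_evalR_conj (P Q : 'M[R]_n.+1) k z : Q * P = k%:A -> (0 < N)%N ->
  mlp_evalR (fun i => P * z i * Q) = k ^+ N.-1 *: (P * mlp_evalR z * Q).
Proof.
move=> QP N_gt0; rewrite /mlp_evalR mulr_sumr mulr_suml scaler_sumr.
apply: eq_bigr => s _; rewrite (prod_conj_scalar (fun i => z (s i)) QP); last first.
  by rewrite size_index_enum_ord.
by rewrite size_index_enum_ord -scalerAr -scalerAl !scalerA mulrC.
Qed.
End MultilinearEval.

Lemma map_mlp_evalR (R S : comNzRingType) (phi : {rmorphism R -> S}) N n (c : 'S_N -> R)
    (z : 'I_N -> 'M[R]_n.+1) :
  map_mx phi (mlp_evalR c z) = mlp_evalR (phi \o c) (map_mx phi \o z).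
Proof.
rewrite /mlp_evalR rmorph_sum; apply: eq_bigr => s _.
by rewrite /= map_mxZ rmorph_prod.
Qed.

Lemma mlp_evalR0 (R : comNzRingType) n (c : 'S_0 -> R) (z : 'I_0 -> 'M[R]_n.+1) :
  is_scalar_mx (mlp_evalR c z).
Proof.
apply/is_scalar_mxP; exists (\sum_s c s).
by rewrite /mlp_evalR; under eq_bigr do rewrite big_ord0; rewrite -scaler_suml scalemx1.
Qed.

Lemma linear_mx_eq0 (R : pzRingType) m n p q (f : 'M[R]_(m, n) -> 'M[R]_(p, q)) :
  linear f -> (forall i j, f (delta_mx i j) = 0) -> forall A, f A = 0.
Proof.
move=> fL f_delta A; have f0 : f 0 = 0 by rewrite -(subrr 0) (zmod_morphism_linear fL) subrr.
have fD x y : f x = 0 -> f y = 0 -> f (x + y) = 0.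
  by move=> fx fy; rewrite -[x]scale1r fL fx fy scaler0 addr0.
rewrite (matrix_sum_delta A); apply: (big_ind (fun x => f x = 0)) => // i _.
apply: (big_ind (fun x => f x = 0)) => // j _.
by rewrite -[_ *: _]addr0 fL f_delta f0 scaler0 addr0.
Qed.

Section BilinearMx.
Variables (R : comNzRingType) (m n p q : nat).
Variable B : 'M[R]_(m, n) -> 'M[R]_(m, n) -> 'M[R]_(p, q).
Hypotheses (BL : forall Y, linear (B^~ Y)) (BR : forall X, linear (B X)).

Lemma bilinearDl X1 X2 Y : B (X1 + X2) Y = B X1 Y + B X2 Y.
Proof. by rewrite -[X1]scale1r BL !scale1r. Qed.

Lemma bilinearDr X Y1 Y2 : B X (Y1 + Y2) = B X Y1 + B X Y2.
Proof. by rewrite -[Y1]scale1r BR !scale1r. Qed.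

Lemma bilinear_diagZ k X : B (k *: X) (k *: X) = k ^+ 2 *: B X X.
Proof.
have B0l Y : B 0 Y = 0 by rewrite -(subrr 0) (zmod_morphism_linear (BL Y)) subrr.
have B0r Y : B Y 0 = 0 by rewrite -(subrr 0) (zmod_morphism_linear (BR Y)) subrr.
have BZr Z : B Z (k *: X) = k *: B Z X by rewrite -[k *: X]addr0 BR B0r addr0.
by rewrite BZr -[k *: X]addr0 BL B0l addr0 scalerA.
Qed.

End BilinearMx.

Lemma bilinear_diag_eq0_ext (K : nzRingType) (S : idomainType) (phi : {rmorphism K -> S})
    m n p q (B : 'M[S]_(m, n) -> 'M[S]_(m, n) -> 'M[S]_(p, q)) :
  (forall Y, linear (B^~ Y)) -> (forall X, linear (B X)) -> (2 : S) != 0 ->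
  (forall v, B (map_mx phi v) (map_mx phi v) = 0) -> forall W, B W W = 0.
Proof.
move=> BL BR two B_K W; pose C X Y := B X Y + B Y X.
have CL Y : linear (C ^~ Y) by move=> a X1 X2; rewrite /C BL BR scalerDr addrACA.
have CR X : linear (C X) by move=> a Y1 Y2; rewrite /C BL BR scalerDr addrACA.
have C_K v1 v2 : C (map_mx phi v1) (map_mx phi v2) = 0.
  have := B_K (v1 + v2).
  by rewrite map_mxD (bilinearDl BL) !(bilinearDr BR) !B_K add0r addr0.
have C_delta X i j : C X (delta_mx i j) = 0.
  move: X; apply: linear_mx_eq0 (CL _) _ => k l.
  by rewrite -(map_delta_mx phi) -(map_delta_mx phi k l) C_K.
have /eqP := linear_mx_eq0 (CR W) (C_delta W) W.
by rewrite /C -mulr2n -scaler_nat scalemx_eq0 (negPf two) => /eqP.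
Qed.

Section MultilinearIdentity.
Variables (S : idomainType) (n p q : nat) (B : 'M[S]_n.+1 -> 'M[S]_n.+1 -> 'M[S]_(p, q)).
Hypotheses (BL : forall Y, linear (B^~ Y)) (BR : forall X, linear (B X)).
Variable N : nat.

Lemma bilinear_mlp_evalR_ext (K : comNzRingType) (phi : {rmorphism K -> S})
    (c : 'S_N -> K) :
  (2 : S) != 0 ->
  (forall z, B (map_mx phi (mlp_evalR c z)) (map_mx phi (mlp_evalR c z)) = 0) ->
  forall z, B (mlp_evalR (phi \o c) z) (mlp_evalR (phi \o c) z) = 0.
Proof.
(* Induction on k: the variables z_i with k <= i are still required to come from K. *)
move=> two B_K; pose G (z : 'I_N -> 'M[S]_n.+1) := mlp_evalR (phi \o c) z.
suff G_K k z : (forall i : 'I_N, (k <= i)%N -> exists v, z i = map_mx phi v) ->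
    B (G z) (G z) = 0.
  by move=> z; apply: (G_K N) => i; rewrite leqNgt ltn_ord.
elim: k z => [|k IHk] z z_K.
  have [y zy] := fin_all_exists (fun i => z_K i (leq0n i)).
  by rewrite /G (eq_mlp_evalR _ zy) -map_mlp_evalR B_K.
have [k_lt_N | N_le_k] := ltnP k N; last first.
  by apply: IHk => i; rewrite leqNgt (leq_trans (ltn_ord i) N_le_k).
pose kk := Ordinal k_lt_N; pose Gk w := G [eta z with kk |-> w].
have GkL : linear Gk by apply: mlp_evalR_update_linear.
have -> : G z = Gk (z kk) by apply: eq_mlp_evalR => i /=; case: eqP => [->|].
apply: (@bilinear_diag_eq0_ext K S phi _ _ _ _ (fun X Y => B (Gk X) (Gk Y)) _ _ two)
  => [Y a X1 X2 | X a Y1 Y2 | v]; first by rewrite /= GkL BL.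
  by rewrite /= GkL BR.
apply: IHk => i k_le_i /=; case: eqP => [_|/eqP i_neq_kk]; first by exists v.
apply: z_K; rewrite ltn_neqAle k_le_i andbT; apply: contra i_neq_kk => /eqP k_eq_i.
by apply/eqP/val_inj.
Qed.

Lemma bilinear_mlp_evalR_conj (c : 'S_N -> S) (P Q : 'M[S]_n.+1) k :
  (0 < N)%N -> Q * P = k%:A -> k != 0 ->
  (forall z, B (mlp_evalR c z) (mlp_evalR c z) = 0) ->
  forall z, B (P * mlp_evalR c z * Q) (P * mlp_evalR c z * Q) = 0.
Proof.
move=> N_gt0 QP k_neq0 B_c z; have /eqP := B_c (fun i => P * z i * Q).
rewrite (mlp_evalR_conj _ _ QP N_gt0) (bilinear_diagZ BL BR) scalemx_eq0 !expf_eq0.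
by rewrite (negPf k_neq0) !andbF => /eqP.
Qed.
End MultilinearIdentity.

Lemma addr5ACA (V : zmodType) (x1 y1 x2 y2 x3 y3 x4 y4 x5 y5 : V) :
  (x1 + y1) + (x2 + y2) + (x3 + y3) + (x4 + y4) - (x5 + y5) =
  (x1 + x2 + x3 + x4 - x5) + (y1 + y2 + y3 + y4 - y5).
Proof.
by rewrite opprD (addrACA x1) (addrACA (x1 + x2)) (addrACA (x1 + x2 + x3))
  (addrACA (x1 + x2 + x3 + x4)).
Qed.

Section GpiForm.
Variables (R : comNzRingType) (n : nat) (a1 a2 a3 a4 a5 a6 : 'M[R]_n.+1).

(* The identity of the statement reads [gpi_form F F = 0]; separating the two
   occurrences of F makes the form bilinear. *)
Definition gpi_form (X Y : 'M[R]_n.+1) :=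
  a1 * X * Y + a2 * X * a3 * Y + X * a5 * Y * a6 + X * a4 * Y - a5 * X * Y * a6.

Lemma gpi_form_linearl Y : linear (gpi_form^~ Y).
Proof.
move=> k X1 X2.
by rewrite /gpi_form !(mulrDl, mulrDr) addr5ACA -!scalerAr -!scalerAl scalerBr !scalerDr.
Qed.

Lemma gpi_form_linearr X : linear (gpi_form X).
Proof.
move=> k Y1 Y2.
by rewrite /gpi_form !(mulrDl, mulrDr) addr5ACA -!scalerAr -!scalerAl scalerBr !scalerDr.
Qed.
End GpiForm.

Lemma map_gpi_form (R S : comNzRingType) (phi : {rmorphism R -> S}) n
    (a1 a2 a3 a4 a5 a6 X Y : 'M[R]_n.+1) :
  map_mx phi (gpi_form a1 a2 a3 a4 a5 a6 X Y) =
  gpi_form (map_mx phi a1) (map_mx phi a2) (map_mx phi a3) (map_mx phi a4)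
    (map_mx phi a5) (map_mx phi a6) (map_mx phi X) (map_mx phi Y).
Proof. by rewrite /gpi_form rmorphB !rmorphD !rmorphM. Qed.

Definition gpi_identity (R : comNzRingType) N n (c : 'S_N -> R)
    (a1 a2 a3 a4 a5 a6 : 'M[R]_n.+1) :=
  forall z, gpi_form a1 a2 a3 a4 a5 a6 (mlp_evalR c z) (mlp_evalR c z) = 0.

Lemma gpi_identity_polyC (D : idomainType) N n (c : 'S_N -> D)
    (a1 a2 a3 a4 a5 a6 : 'M[D]_n.+1) :
  (2 : D) != 0 -> gpi_identity c a1 a2 a3 a4 a5 a6 ->
  gpi_identity (polyC \o c) (map_mx polyC a1) (map_mx polyC a2) (map_mx polyC a3)
    (map_mx polyC a4) (map_mx polyC a5) (map_mx polyC a6).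
Proof.
move=> two gpi_c.
apply: (bilinear_mlp_evalR_ext (gpi_form_linearl _ _ _ _ _ _) (gpi_form_linearr _ _ _ _ _ _)).
  by rewrite -(rmorph_nat polyC) polyC_eq0.
by move=> z; rewrite -map_gpi_form gpi_c raddf0.
Qed.

Lemma map_mx_horner_polyC (R : comNzRingType) m n x (A : 'M[R]_(m, n)) :
  map_mx (horner_eval x) (map_mx polyC A) = A.
Proof. by apply/matrixP => i j; rewrite !mxE horner_evalE hornerC. Qed.

Lemma gpi_identity_sqr0_sandwich (D : idomainType) N n (c : 'S_N -> D)
    (a1 a2 a3 a4 a5 a6 : 'M[D]_n.+1) :
  (0 < N)%N ->
  gpi_identity (polyC \o c) (map_mx polyC a1) (map_mx polyC a2) (map_mx polyC a3)
    (map_mx polyC a4) (map_mx polyC a5) (map_mx polyC a6) ->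
  forall z E, E * E = 0 ->
  gpi_form a1 a2 a3 a4 a5 a6 (E * mlp_evalR c z * E) (E * mlp_evalR c z * E) = 0.
Proof.
move=> N_gt0 gpi_u z E EE; pose X := mlp_evalR c z.
pose u : {poly D} := 'X; pose Eu := map_mx polyC E.
(* Conjugate by u + E, whose inverse is (u - E) / u^2, then specialize u to 0. *)
have QP : (u%:A - Eu) * (u%:A + Eu) = (u * u)%:A.
  by rewrite mulrDr !mulrBl -rmorphM EE raddf0 subr0 !mulr_algr mulr_algl subrK scalerA.
have uu_neq0 : u * u != 0 by rewrite mulf_neq0 ?polyX_eq0.
have at_u0 : map_mx (horner_eval 0) ((u%:A + Eu) * map_mx polyC X * (u%:A - Eu)) =
    - (E * X * E).
  rewrite !rmorphM rmorphB rmorphD /= !map_mx_horner_polyC map_mxZ /= horner_evalE hornerX.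
  by rewrite scale0r add0r sub0r mulrN.
have := bilinear_mlp_evalR_conj (gpi_form_linearl _ _ _ _ _ _) (gpi_form_linearr _ _ _ _ _ _)
  N_gt0 QP uu_neq0 gpi_u (map_mx polyC \o z).
rewrite -map_mlp_evalR => /(congr1 (map_mx (horner_eval 0))).
rewrite map_gpi_form raddf0 !map_mx_horner_polyC at_u0 -scaleN1r.
rewrite (bilinear_diagZ (gpi_form_linearl _ _ _ _ _ _) (gpi_form_linearr _ _ _ _ _ _)).
by rewrite expr2 mulrNN mulr1 scale1r.
Qed.

Lemma mul_delta_mx_entry (R : comNzRingType) n (P Q : 'M[R]_n.+1) i j k l :
  (P * delta_mx i j * Q) k l = P k i * Q j l.
Proof.
rewrite -!mulmxE.
have Pd m : (P *m delta_mx i j) k m = P k i * (m == j)%:R.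
  rewrite mxE (bigD1 i) //= big1 ?addr0 => [|r /negPf r_neq_i].
    by rewrite mxE eqxx.
  by rewrite mxE r_neq_i mulr0.
rewrite mxE (bigD1 j) //= big1 ?addr0 => [|m /negPf m_neq_j].
  by rewrite Pd eqxx mulr1.
by rewrite Pd m_neq_j mulr0 mul0r.
Qed.

Lemma mul_delta_mx_sandwich (R : comNzRingType) n (A : 'M[R]_n.+1) i j k l :
  delta_mx i j * A * delta_mx k l = A j k *: delta_mx i l.
Proof.
apply/matrixP => r s; rewrite -mulrA -[A * _]mulr1 -[delta_mx i j]mul1r.
rewrite !mul_delta_mx_entry !mxE [s == l]eq_sym.
by case: (r == i); case: (l == s); rewrite /= ?(mulr1n, mulr0n, mul1r, mul0r, mulr1, mulr0).
Qed.

Section AdjointConjugation.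
Variables (R : comNzRingType) (n : nat) (H : 'M[R]_n.+1) (i j : 'I_n.+1).
Hypothesis i_neq_j : i != j.
Local Notation phi M := ((H * M * \adj H) j i).
Local Notation F := (\adj H * delta_mx i j * H).

Lemma adj_conj_entryD M N : phi (M + N) = phi M + phi N.
Proof. by rewrite mulrDr mulrDl mxE. Qed.

Lemma adj_conj_entryZ a M : phi (a *: M) = a * phi M.
Proof. by rewrite -scalerAr -scalerAl mxE. Qed.

Lemma adj_conj_entryZr M a N : phi (M * (a *: N)) = a * phi (M * N).
Proof. by rewrite -!scalerAr -scalerAl mxE. Qed.

Lemma adj_conj_entry1 : phi 1 = 0.
Proof. by rewrite mulr1 -mulmxE mul_mx_adj mxE eq_sym (negPf i_neq_j) mulr0n. Qed.

Lemma adj_conj_entry_delta M N : phi (M * F * N) = phi M * phi N.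
Proof.
have -> : H * (M * F * N) * \adj H = H * M * \adj H * delta_mx i j * (H * N * \adj H).
  by rewrite !mulrA.
exact: mul_delta_mx_entry.
Qed.

Lemma adj_delta_conj M : F * M * F = phi M *: F.
Proof.
have -> : F * M * F = \adj H * (delta_mx i j * (H * M * \adj H) * delta_mx i j) * H.
  by rewrite !mulrA.
by rewrite mul_delta_mx_sandwich -scalerAr -scalerAl.
Qed.

Lemma adj_delta_sqr : F * F = 0.
Proof. by have := adj_delta_conj 1; rewrite adj_conj_entry1 scale0r mulr1. Qed.

Variables (a1 a2 a3 a4 a5 a6 : 'M[R]_n.+1).
Local Notation gpi X := (gpi_form a1 a2 a3 a4 a5 a6 X X).

Lemma gpi_form_adj_delta : gpi F = phi a3 *: (a2 * F) + phi a5 *: (F * a6) + phi a4 *: F.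
Proof.
rewrite /gpi_form -(mulrA a1) -(mulrA a5) adj_delta_sqr !mulr0 mul0r add0r subr0.
rewrite -(mulrA (a2 * F)) -(mulrA a2) (mulrA F a3) !adj_delta_conj.
by rewrite -scalerAr -scalerAl.
Qed.

Lemma gpi_adj_delta_entries X :
  phi (gpi F * X) = phi a2 * phi a3 * phi X /\ phi (X * gpi F) = phi X * phi a5 * phi a6.
Proof.
have phiFl N : phi (F * N) = 0.
  by rewrite -[F]mul1r adj_conj_entry_delta adj_conj_entry1 mul0r.
have phiFr M : phi (M * F) = 0.
  by rewrite -[M * F]mulr1 adj_conj_entry_delta adj_conj_entry1 mulr0.
rewrite gpi_form_adj_delta; split.
  rewrite !mulrDl -!scalerAl !adj_conj_entryD !adj_conj_entryZ -(mulrA F) !phiFl.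
  by rewrite adj_conj_entry_delta !mulr0 !addr0; ring.
rewrite !(mulrDr X) !adj_conj_entryD !adj_conj_entryZr (mulrA X a2) (mulrA X F) !phiFr.
by rewrite adj_conj_entry_delta !mulr0 add0r addr0; ring.
Qed.

Lemma gpi_sqr0_sandwich_entries X : (forall E, E * E = 0 -> gpi (E * X * E) = 0) ->
  phi a2 * phi a3 * phi X ^+ 3 = 0 /\ phi a5 * phi a6 * phi X ^+ 3 = 0.
Proof.
move=> gpi_sqr0; have := gpi_sqr0 _ adj_delta_sqr.
rewrite adj_delta_conj.
rewrite (bilinear_diagZ (gpi_form_linearl _ _ _ _ _ _) (gpi_form_linearr _ _ _ _ _ _)) => gpiF0.
have [gpiFX XgpiF] := gpi_adj_delta_entries X.
have gpiFX0 := congr1 (fun M => phi (M * X)) gpiF0.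
have XgpiF0 := congr1 (fun M => phi (X * M)) gpiF0.
rewrite /= -scalerAl adj_conj_entryZ gpiFX !(mul0r, mulr0) [RHS]mxE in gpiFX0.
rewrite /= adj_conj_entryZr XgpiF !(mul0r, mulr0) [RHS]mxE in XgpiF0.
by split; [rewrite -gpiFX0 | rewrite -XgpiF0]; ring.
Qed.
End AdjointConjugation.

Lemma perm_pair_exists n (i j p q : 'I_n) :
  i != j -> p != q -> exists s : 'S_n, s i = p /\ s j = q.
Proof.
move=> i_neq_j p_neq_q; pose t := tperm i p.
have tj_neq_p : t j != p.
  rewrite /t; case: tpermP => [j_eq_i | <- // | _ /eqP //].
    by move: i_neq_j; rewrite j_eq_i eqxx.
exists (t * tperm (t j) q)%g; by rewrite !permM tpermL tpermL tpermD // eq_sym.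
Qed.

Lemma perm_mx_conj_entry (R : comUnitRingType) n (s : 'S_n.+1) (Y : 'M[R]_n.+1) k l :
  (perm_mx s * Y * (perm_mx s)^-1) k l = Y (s k) (s l).
Proof. by rewrite -perm_mxV -!mulmxE -row_permE -col_permE !mxE. Qed.

Lemma unipotent_conj_entry (R : comNzRingType) n (Y : 'M[R]_n.+1) i p : i != p ->
  ((1 + delta_mx i p) * Y * (1 - delta_mx i p)) i p = Y i p + Y p p - Y i i - Y p i.
Proof.
move=> i_neq_p.
have entry_delta_mul (Q : 'M[R]_n.+1) k l : (delta_mx i p * Q) k l = (k == i)%:R * Q p l.
  by rewrite -[delta_mx i p]mul1r mul_delta_mx_entry mxE.
have entry_mul_delta (P : 'M[R]_n.+1) k l : (P * delta_mx i p) k l = P k i * (l == p)%:R.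
  by rewrite -[P * _]mulr1 mul_delta_mx_entry mxE eq_sym.
have entryD (A B : 'M[R]_n.+1) : (A + B) i p = A i p + B i p by rewrite mxE.
have entryB (A B : 'M[R]_n.+1) : (A - B) i p = A i p - B i p by rewrite !mxE.
have -> : (1 + delta_mx i p) * Y * (1 - delta_mx i p) =
    Y + delta_mx i p * Y - Y * delta_mx i p - delta_mx i p * Y * delta_mx i p.
  by rewrite mulrDl mul1r mulrBr mulr1 mulrDl opprD addrA.
by rewrite !entryB entryD entry_delta_mul entry_mul_delta -mulrA entry_delta_mul
  entry_mul_delta !eqxx /= !mul1r !mulr1.
Qed.

Lemma offdiag_conj_entry (K : fieldType) n (Y : 'M[K]_n.+1) i j p q :
  i != j -> p != q -> Y p q != 0 ->
  exists2 h : 'M[K]_n.+1, h \is a GRing.unit & (h * Y * h^-1) j i != 0.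
Proof.
rewrite eq_sym => j_neq_i p_neq_q Ypq; have [s [sj si]] := perm_pair_exists j_neq_i p_neq_q.
by exists (perm_mx s); [exact: unitmx_perm | rewrite perm_mx_conj_entry sj si].
Qed.

Lemma nonscalar_conj_entry (K : fieldType) n (Y : 'M[K]_n.+1) i j :
  i != j -> ~~ is_scalar_mx Y ->
  exists2 h : 'M[K]_n.+1, h \is a GRing.unit & (h * Y * h^-1) j i != 0.
Proof.
move=> i_neq_j Y_nscalar.
have [/existsP[p /existsP[q /andP[p_neq_q Ypq]]] | Y_diag] :=
  boolP [exists p, exists q, (p != q) && (Y p q != 0)].
  exact: offdiag_conj_entry i_neq_j p_neq_q Ypq.
have Y_offdiag p q : p != q -> Y p q = 0.
  move=> p_neq_q; apply/eqP; apply: contraNT Y_diag => Ypq.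
  by apply/existsP; exists p; apply/existsP; exists q; rewrite p_neq_q.
have [/existsP[p Ypp] | Y_const] := boolP [exists p, Y p p != Y i i]; last first.
  case/negP: Y_nscalar; apply/is_scalar_mxP; exists (Y i i); apply/matrixP => p q.
  rewrite mxE; have [<- | p_neq_q] := eqVneq p q; last by rewrite (Y_offdiag p q p_neq_q).
  rewrite mulr1n.
  by apply/eqP; apply: contraNT Y_const => Ypp; apply/existsP; exists p.
have i_neq_p : i != p by apply: contraNneq Ypp => <-.
pose g : 'M[K]_n.+1 := 1 + delta_mx i p.
have gV : (1 - delta_mx i p) * g = 1.
  have ee : delta_mx i p * delta_mx i p = 0 :> 'M[K]_n.+1.
    by rewrite -mulmxE mul_delta_mx_0 // eq_sym.
  by rewrite mulrDr mulr1 mulrBl mul1r ee subr0 subrK.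
have [_ g_unit] := mulmx1_unit gV.
have g_inv : g^-1 = 1 - delta_mx i p by apply: (mulIr g_unit); rewrite mulVr // gV.
have gYg_ip : (g * Y * g^-1) i p != 0.
  rewrite g_inv unipotent_conj_entry // (Y_offdiag i p i_neq_p) (Y_offdiag p i).
    by rewrite add0r subr0 subr_eq0.
  by rewrite eq_sym.
have [h h_unit hYij] := offdiag_conj_entry i_neq_j i_neq_p gYg_ip.
exists (h * g); first by rewrite unitrMl.
by rewrite invrM // !mulrA in hYij *.
Qed.

Lemma horner_adj_conj_entry (R : comNzRingType) n (H : 'M[{poly R}]_n.+1) (Y : 'M[R]_n.+1)
    i j x :
  ((H * map_mx polyC Y * \adj H) j i).[x] =
  (map_mx (horner_eval x) H * Y * \adj (map_mx (horner_eval x) H)) j i.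
Proof.
have -> : ((H * map_mx polyC Y * \adj H) j i).[x] =
    map_mx (horner_eval x) (H * map_mx polyC Y * \adj H) j i by rewrite [RHS]mxE.
by rewrite !rmorphM /= map_mx_adj map_mx_horner_polyC.
Qed.

Lemma interpolation_mx3 (K : fieldType) m n (h0 h1 h2 : 'M[K]_(m, n)) : (2 : K) != 0 ->
  exists H : 'M[{poly K}]_(m, n), [/\ map_mx (horner_eval 0) H = h0,
    map_mx (horner_eval 1) H = h1 & map_mx (horner_eval (-1)) H = h2].
Proof.
(* The Lagrange basis for the nodes 0, 1, -1, which are distinct because 2 != 0. *)
move=> two; pose L0 : {poly K} := 1 - 'X^2.
pose L1 : {poly K} := 2^-1 *: ('X^2 + 'X); pose L2 : {poly K} := 2^-1 *: ('X^2 - 'X).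
exists (L0 *: map_mx polyC h0 + L1 *: map_mx polyC h1 + L2 *: map_mx polyC h2).
have HE x : map_mx (horner_eval x) (L0 *: map_mx polyC h0 + L1 *: map_mx polyC h1
    + L2 *: map_mx polyC h2) = L0.[x] *: h0 + L1.[x] *: h1 + L2.[x] *: h2.
  by apply/matrixP => p q; rewrite !mxE !horner_evalE !hornerE.
have L0E x : L0.[x] = 1 - x ^+ 2 by rewrite !hornerE.
have L1E x : L1.[x] = 2^-1 * (x ^+ 2 + x) by rewrite !hornerE.
have L2E x : L2.[x] = 2^-1 * (x ^+ 2 - x) by rewrite !hornerE.
have HEx x (b0 b1 b2 : K) : L0.[x] = b0 -> L1.[x] = b1 -> L2.[x] = b2 ->
    map_mx (horner_eval x) (L0 *: map_mx polyC h0 + L1 *: map_mx polyC h1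
    + L2 *: map_mx polyC h2) = b0 *: h0 + b1 *: h1 + b2 *: h2.
  by move=> <- <- <-; exact: HE.
split.
- by rewrite (HEx _ 1 0 0) ?scale1r ?scale0r ?addr0 //; rewrite ?L0E ?L1E ?L2E; field.
- by rewrite (HEx _ 0 1 0) ?scale1r ?scale0r ?addr0 ?add0r //; rewrite ?L0E ?L1E ?L2E; field.
- by rewrite (HEx _ 0 0 1) ?scale1r ?scale0r ?addr0 ?add0r //; rewrite ?L0E ?L1E ?L2E; field.
Qed.

Lemma nonscalar_adj_conj_entry (K : fieldType) n (Y : 'M[K]_n.+1) i j :
  i != j -> ~~ is_scalar_mx Y -> exists h : 'M[K]_n.+1, (h * Y * \adj h) j i != 0.
Proof.
move=> i_neq_j /(nonscalar_conj_entry i_neq_j)[h h_unit hYh]; exists h.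
have adj_h : \adj h = \det h *: h^-1.
  have h_adj : h * \adj h = (\det h)%:M by exact: mul_mx_adj.
  have h_scalar : h^-1 * (\det h)%:M = \det h *: h^-1 by exact: mul_mx_scalar.
  by rewrite -[\adj h]mul1r -(mulVr h_unit) -mulrA h_adj h_scalar.
by rewrite adj_h -scalerAr mxE mulf_neq0 // -unitfE -unitmxE.
Qed.

Lemma nonscalar_adj_conj_entry_poly (K : fieldType) n (i j : 'I_n.+1)
    (Y0 Y1 Y2 : 'M[K]_n.+1) :
  (2 : K) != 0 -> i != j ->
  ~~ is_scalar_mx Y0 -> ~~ is_scalar_mx Y1 -> ~~ is_scalar_mx Y2 ->
  exists H : 'M[{poly K}]_n.+1, [/\ (H * map_mx polyC Y0 * \adj H) j i != 0,
    (H * map_mx polyC Y1 * \adj H) j i != 0 & (H * map_mx polyC Y2 * \adj H) j i != 0].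
Proof.
move=> two i_neq_j /(nonscalar_adj_conj_entry i_neq_j)[h0 Y0h0].
move=> /(nonscalar_adj_conj_entry i_neq_j)[h1 Y1h1].
move=> /(nonscalar_adj_conj_entry i_neq_j)[h2 Y2h2].
have [H [H0 H1 H2]] := interpolation_mx3 h0 h1 h2 two.
have H_neq0 x h Y : map_mx (horner_eval x) H = h -> (h * Y * \adj h) j i != 0 ->
    (H * map_mx polyC Y * \adj H) j i != 0.
  by move=> <-; apply: contraNneq => HY; rewrite -horner_adj_conj_entry HY horner0.
by exists H; split; [exact: H_neq0 H0 Y0h0 | exact: H_neq0 H1 Y1h1 | exact: H_neq0 H2 Y2h2].
Qed.

Lemma gpi_identity_scalar_coefs (K : fieldType) N n (c : 'S_N -> K)
    (a1 a2 a3 a4 a5 a6 : 'M[K]_n.+2) (z0 : 'I_N -> 'M[K]_n.+2) :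
  (2 : K) != 0 -> gpi_identity c a1 a2 a3 a4 a5 a6 -> ~~ is_scalar_mx (mlp_evalR c z0) ->
  (is_scalar_mx a2 || is_scalar_mx a3) && (is_scalar_mx a5 || is_scalar_mx a6).
Proof.
move=> two gpi_c X_nscalar.
have N_gt0 : (0 < N)%N by case: N c z0 gpi_c X_nscalar => // c z0 _; rewrite mlp_evalR0.
have gpi_t := gpi_identity_polyC two gpi_c.
have two_t : (2 : {poly K}) != 0 by rewrite -(rmorph_nat polyC) polyC_eq0.
have gpi_sqr0 := gpi_identity_sqr0_sandwich N_gt0 (gpi_identity_polyC two_t gpi_t).
pose X := map_mx polyC (mlp_evalR c z0).
have X_sqr0 E : E * E = 0 -> gpi_form (map_mx polyC a1) (map_mx polyC a2) (map_mx polyC a3)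
    (map_mx polyC a4) (map_mx polyC a5) (map_mx polyC a6) (E * X * E) (E * X * E) = 0.
  by rewrite /X map_mlp_evalR; apply: gpi_sqr0.
pose i : 'I_n.+2 := ord0; pose j : 'I_n.+2 := ord_max.
have i_neq_j : i != j by [].
have pair_scalar (Y1 Y2 : 'M[K]_n.+2) :
    (forall H, let phi Y := (H * map_mx polyC Y * \adj H) j i in
       phi Y1 * phi Y2 * phi (mlp_evalR c z0) ^+ 3 = 0) ->
    is_scalar_mx Y1 || is_scalar_mx Y2.
  move=> Y_sqr0; apply/negPn/negP => /norP[Y1_nscalar Y2_nscalar].
  have [H [XH Y1H Y2H]] :=
    nonscalar_adj_conj_entry_poly two i_neq_j X_nscalar Y1_nscalar Y2_nscalar.
  by move: (Y_sqr0 H) => /=; apply/eqP; rewrite !mulf_neq0 ?expf_neq0.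
rewrite !pair_scalar // => H; have [X23 X56] := gpi_sqr0_sandwich_entries H i_neq_j X_sqr0.
  exact: X56.
exact: X23.
Qed.

Theorem lemma2 (K : fieldType) (d n : nat) (f : multilin_poly K n)
  (a1 a2 a3 a4 a5 a6 : 'M[K]_d.+2) :
  2 \notin [pchar K] ->
  ~ central_valued d.+1 f ->
  (forall z : 'I_n -> 'M[K]_d.+2,
     let F := mlp_eval f z in
     a1 * F ^+ 2 + a2 * F * a3 * F + F * a5 * F * a6 + F * a4 * F
       - a5 * F ^+ 2 * a6 = 0) ->
  [\/ is_scalar_mx a2 /\ is_scalar_mx a5,
      is_scalar_mx a2 /\ is_scalar_mx a6,
      is_scalar_mx a3 /\ is_scalar_mx a5 |
      is_scalar_mx a3 /\ is_scalar_mx a6].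
Proof.
move=> char2 f_noncentral f_gpi.
have two : (2 : K) != 0 by apply: contraNneq char2 => two0; rewrite inE /= two0 eqxx.
have gpi_f : gpi_identity f a1 a2 a3 a4 a5 a6.
  by move=> z; rewrite -[RHS](f_gpi z) /gpi_form !expr2 !mulrA.
have [/andP[/orP[s2 | s3] /orP[s5 | s6]] | not_pairs] :=
  boolP ((is_scalar_mx a2 || is_scalar_mx a3) && (is_scalar_mx a5 || is_scalar_mx a6)).
- by constructor 1.
- by constructor 2.
- by constructor 3.
- by constructor 4.
exfalso; apply: f_noncentral => z; apply/negPn; apply: contra not_pairs.
exact: gpi_identity_scalar_coefs two gpi_f.
Qed.
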